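(* Let $\phi:\mathbb{R}^2\to\mathbb{R}^2$ be an invertible affine transformation and let $\sigma$ be the coordinatewise $\textsc{ReLU}$ on $\mathbb R^2$. Let $x\in\mathbb{R}^2$ and $\mathcal T\subset\mathbb{R}^2$ be such that $x$ lies in a bounded path-connected component of $\mathbb{R}^2\setminus\mathcal T$. Put $x^\prime:=\phi^{-1}\circ\sigma\circ\phi(x)$ and $\mathcal T^\prime:=\phi^{-1}\circ\sigma\circ\phi(\mathcal T)$. Then: (i) if $x^\prime=x$ and $x^\prime\notin\mathcal T^\prime$, then $x^\prime$ lies in a bounded path-connected component of $\mathbb R^2\setminus \mathcal T^\prime$; (ii) if $x^\prime\ne x$, then $x^\prime\in\mathcal T^\prime$.
   Context: $\sigma(x_1,x_2)=(\max\{x_1,0\},\max\{x_2,0\})$. *)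

From mathcomp Require Import all_boot all_order all_algebra.
From mathcomp Require Import all_classical all_reals all_analysis.
Set Implicit Arguments. Unset Strict Implicit. Unset Printing Implicit Defensive.
Import Order.TTheory GRing.Theory Num.Theory numFieldNormedType.Exports.
Local Open Scope ring_scope.
Local Open Scope classical_set_scope.

Section Defs.
Variable R : realType.

Definition relu2 (p : R * R) : R * R := (Num.max p.1 0, Num.max p.2 0).

Definition affine2 (phi : R * R -> R * R) : Prop :=
  exists a11 a12 a21 a22 b1 b2 : R, forall p : R * R,
    phi p = (a11 * p.1 + a12 * p.2 + b1, a21 * p.1 + a22 * p.2 + b2).

Definition path_in (S : set (R * R)) (x y : R * R) : Prop :=
  exists g : R -> R * R,
    {within `[0, 1], continuous g} /\ g 0 = x /\ g 1 = y /\
    (forall t : R, 0 <= t <= 1 -> S (g t)).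

Definition path_component (S : set (R * R)) (x : R * R) : set (R * R) :=
  [set y | path_in S x y].

Definition bounded2 (A : set (R * R)) : Prop :=
  exists M : R, forall y, A y -> `|y.1| <= M /\ `|y.2| <= M.

Definition in_bounded_component (S : set (R * R)) (x : R * R) : Prop :=
  S x /\ bounded2 (path_component S x).

End Defs.

From mathcomp Require Import all_boot all_order all_algebra.
From mathcomp Require Import all_classical all_reals all_analysis.
From mathcomp Require Import ring lra.
Set Implicit Arguments. Unset Strict Implicit. Unset Printing Implicit Defensive.
Import Order.TTheory GRing.Theory Num.Theory numFieldNormedType.Exports.
Local Open Scope ring_scope.
Local Open Scope classical_set_scope.

(* Write F := phi^-1 \o relu2 \o phi.  In phi-coordinates relu2 fixes the
   closed quadrant Q and is constant along a ray in direction -e1 or -e2 from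
   every point outside the interior of Q.  Pulling back, F is constant along a
   ray issuing from every point p with phi p not in the interior of Q.  If p is
   reachable from x in the complement of T and F p is not in T' = F(T), the
   whole ray avoids T, contradicting the boundedness of the component of x.
   For (ii) take p = x.  For (i), a path from x in the complement of T' that
   stays in phi^-1(Q) avoids T, because F fixes its points; a path that leaves
   phi^-1(Q) first reaches its boundary, at a point fixed by F. *)

Lemma within_continuous_precomp {T U V : topologicalType} (A : set U)
    (B : set T) (f : T -> U) (g : U -> V) :
  continuous f -> f @` B `<=` A -> {within A, continuous g} ->
  {within B, continuous (g \o f)}.
Proof.
move=> cf fBA /subspace_continuousP cg; apply/subspace_continuousP => x Bx.
apply: (cvg_comp _ _ _ (cg (f x) (fBA _ (imageP _ Bx)))).
move=> P /= /cf; rewrite !near_simpl /=; apply: filterS => z AP Bz.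
exact/AP/fBA/imageP.
Qed.

Section RealFunctions.
Context {R : realType}.

Lemma within_continuous_dist (A : set R) (m : R -> R) s :
  {within A, continuous m} -> A s -> forall e, 0 < e ->
  exists2 d, 0 < d & forall r, A r -> `|s - r| < d -> `|m s - m r| < e.
Proof.
move=> /subspace_continuousP /(_ s) mc As e e0.
have /cvgrPdist_lt /(_ e e0) := mc As.
rewrite /within /= => /nbhs_ballP [d d0 hd].
by exists d => // r Ar sr; apply: hd.
Qed.

Lemma first_root (m : R -> R) t0 : {within `[0, 1], continuous m} ->
  0 <= m 0 -> 0 <= t0 <= 1 -> m t0 < 0 ->
  exists s, [/\ 0 <= s <= 1, m s = 0 & forall r, 0 <= r <= s -> 0 <= m r].
Proof.
move=> mc m0 /andP[t00 t01] mt0.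
pose E := [set t : R | 0 <= t <= 1 /\ m t < 0].
have Et0 : E t0 by rewrite /E /= t00 t01.
have E_lb : has_lbound E by exists 0 => t [/andP[]].
have E_inf : has_inf E by split => //; exists t0.
set s := inf E.
have s_ge0 : 0 <= s by apply: lb_le_inf => [|t [/andP[]]]; first exists t0.
have s_le_t0 : s <= t0 by apply: ge_inf.
have s01 : `[0, 1] s by rewrite /= in_itv /= s_ge0; lra.
have m_ge0_before r : 0 <= r <= 1 -> r < s -> 0 <= m r.
  move=> r01 rs; rewrite leNgt; apply/negP => mr.
  have : s <= r by apply: ge_inf.
  lra.
have ms_ge0 : 0 <= m s.
  rewrite leNgt; apply/negP => ms.
  have s_gt0 : 0 < s.
    by rewrite lt_neqAle s_ge0 andbT; apply: contraTneq ms => <-; rewrite -leNgt.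
  have [d d0 hd] := within_continuous_dist mc s01 (ltac:(lra) : 0 < - m s).
  pose r := Num.max (s - d / 2) 0.
  have r_ge0 : 0 <= r by rewrite le_max lexx orbT.
  have rs : r < s by rewrite gt_max s_gt0 andbT; lra.
  have sr : `|s - r| < d.
    by rewrite ger0_norm ?subr_ge0 ?ltW // ltrBlDr -ltrBlDl lt_max; lra.
  have := hd r; rewrite /= in_itv /= r_ge0 /= => /(_ ltac:(lra) sr).
  have := m_ge0_before r ltac:(lra) rs; rewrite ltr_distlC => ? /andP[]; lra.
have ms_le0 : m s <= 0.
  rewrite leNgt; apply/negP => ms.
  have [d d0 hd] := within_continuous_dist mc s01 ms.
  have [t [/andP[t_ge0 t_le1] mt] td] := inf_adherent d0 E_inf.
  have st : s <= t by apply: ge_inf => //; rewrite /E /= t_ge0 t_le1.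
  have := hd t; rewrite /= in_itv /= t_ge0 t_le1 => /(_ isT).
  rewrite distrC ger0_norm ?subr_ge0 // => /(_ ltac:(lra)).
  rewrite ltr_distlC => /andP[]; lra.
exists s; split => //; first by apply/eqP; rewrite eq_le ms_le0 ms_ge0.
move=> r /andP[r0 rs]; have [->|] := eqVneq r s; first exact: ms_ge0.
by move=> rs'; apply: m_ge0_before; [lra | rewrite lt_neqAle rs' rs].
Qed.
End RealFunctions.

Lemma ray_norm_bounded_eq0 (R : realFieldType) (a c M : R) :
  (forall u, 0 <= u -> `|a + u * c| <= M) -> c = 0.
Proof.
move=> bdd; apply/eqP; apply: contraT => c0.
have c_gt0 : 0 < `|c| by rewrite normr_gt0.
have M_ge_a : `|a| <= M by have := bdd 0 (lexx 0); rewrite mul0r addr0.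
pose u := (M + `|a| + 1) / `|c|.
have u_ge0 : 0 <= u by rewrite divr_ge0 //; have := normr_ge0 a; lra.
have uc : `|u * c| = M + `|a| + 1.
  by rewrite normrM ger0_norm // divfK ?gt_eqF.
have := lerB_normD (u * c) a; rewrite uc [u * c + a]addrC.
have := bdd u u_ge0; lra.
Qed.

Lemma bounded2S {R : realType} (A B : set (R * R)) :
  A `<=` B -> bounded2 B -> bounded2 A.
Proof. by move=> AB [M bddM]; exists M => y /AB /bddM. Qed.

Lemma bounded2_ray {R : realType} (A : set (R * R)) p w :
  bounded2 A -> (forall u, 0 <= u -> A (p + u *: w)) -> w = 0.
Proof.
move=> [M bddM] pwA.
have w1 : w.1 = 0 by apply: (@ray_norm_bounded_eq0 _ p.1 _ M) => u /pwA /bddM [].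
have w2 : w.2 = 0 by apply: (@ray_norm_bounded_eq0 _ p.2 _ M) => u /pwA /bddM [].
by rewrite [w]surjective_pairing w1 w2.
Qed.

Section Paths.
Context {R : realType} (S : set (R * R)).

Lemma path_in_refl x : S x -> path_in S x x.
Proof.
move=> Sx; exists (fun=> x); split; first exact/continuous_subspaceT/cst_continuous.
by do 2 split => //.
Qed.

Lemma path_in_prefix (g : R -> R * R) s :
  {within `[0, 1], continuous g} -> 0 <= s <= 1 ->
  (forall r, 0 <= r <= s -> S (g r)) -> path_in S (g 0) (g s).
Proof.
move=> gc /andP[s0 s1] gS; exists (g \o *%R s); split.
  apply: within_continuous_precomp gc; first exact: mulrl_continuous.
  move=> _ [t /= /[!in_itv] /= /andP[t0 t1] <-] /=.
  by rewrite mulr_ge0 //= mulr_ile1.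
split; first by rewrite /= mulr0.
split; first by rewrite /= mulr1.
move=> t /andP[t0 t1]; apply: gS.
by rewrite mulr_ge0 //= -[leRHS]mulr1 ler_wpM2l.
Qed.

Lemma path_in_trans x y z : path_in S x y -> path_in S y z -> path_in S x z.
Proof.
move=> [g [gc [g0 [g1 gS]]]] [h [hc [h0 [h1 hS]]]].
pose k t := if t <= 2^-1 then g (2 * t) else h (2 * t - 1).
exists k; split; last split; last split.
- have -> : `[0, 1] = `[0, 2^-1] `|` `[2^-1, 1] :> set R.
    apply/seteqP; split => t /=; rewrite !in_itv /=.
      by move=> /andP[t0 t1]; case: (lerP t 2^-1) => ?; [left|right]; lra.
    by case => /andP[? ?]; lra.
  apply: withinU_continuous; [exact: interval_closed | exact: interval_closed | |].
  + have gc' : {within `[0, 2^-1], continuous (g \o *%R 2)}.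
      apply: within_continuous_precomp gc; first exact: mulrl_continuous.
      by move=> _ [t /= /[!in_itv] /= /andP[? ?] <-] /=; lra.
    apply: subspace_eq_continuous gc' => t; rewrite inE /= in_itv /= => /andP[_ t1].
    by rewrite /k /from_subspace t1.
  + have hc' : {within `[2^-1, 1], continuous (h \o (fun t => 2 * t - 1))}.
      apply: within_continuous_precomp hc.
        by move=> t; apply: cvgB; [exact: mulrl_continuous | exact: cvg_cst].
      by move=> _ [t /= /[!in_itv] /= /andP[? ?] <-] /=; lra.
    apply: subspace_eq_continuous hc' => t; rewrite inE /= in_itv /= => /andP[t1 _].
    rewrite /k /from_subspace; case: ifP => // t2; have -> : t = 2^-1 by lra.
    by rewrite /= divff ?pnatr_eq0 // subrr h0 g1.
- by rewrite /k invr_ge0 ler0n mulr0.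
- rewrite /k ifN -?ltNge; last lra.
  by rewrite mulr1 (_ : 2 - 1 = 1) //; lra.
- move=> t /andP[t0 t1]; rewrite /k; case: ifP => t2.
    by apply: gS; lra.
  by apply: hS; lra.
Qed.

Lemma path_in_ray p w L : 0 <= L ->
  (forall u, 0 <= u <= L -> S (p + u *: w)) -> path_in S p (p + L *: w).
Proof.
move=> L0 pwS; exists (fun t => p + (L * t) *: w); split.
  apply/continuous_subspaceT => t; apply: cvgD; first exact: cvg_cst.
  by apply: cvgZ; [exact: mulrl_continuous | exact: cvg_cst].
split; first by rewrite mulr0 scale0r addr0.
split; first by rewrite mulr1.
move=> t /andP[t0 t1]; apply: pwS.
by rewrite mulr_ge0 //= -[leRHS]mulr1 ler_wpM2l.
Qed.

Lemma bounded_component_ray x p w : bounded2 (path_component S x) ->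
  path_in S x p -> (forall u, 0 <= u -> S (p + u *: w)) -> w = 0.
Proof.
move=> bdd xp pwS; apply: (bounded2_ray (p := p) bdd) => u u0.
apply: path_in_trans xp (path_in_ray u0 _) => v /andP[v0 _].
exact: pwS.
Qed.

End Paths.

Section ReluAffine.
Context {R : realType}.

Lemma relu2_fixedP (q : R * R) : relu2 q = q <-> 0 <= Num.min q.1 q.2.
Proof.
rewrite le_min; split => [<-|/andP[q1 q2]]; first by rewrite /= !le_max lexx !orbT.
by rewrite /relu2 !max_l // -surjective_pairing.
Qed.

Lemma add_scale_pair (p : R * R) u (a b : R) :
  p + u *: (a, b) = (p.1 + u * a, p.2 + u * b).
Proof. by []. Qed.

Lemma relu2_ray (q : R * R) : Num.min q.1 q.2 <= 0 ->
  exists2 e : R * R, e != 0 & forall u, 0 <= u -> relu2 (q + u *: e) = relu2 q.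
Proof.
rewrite ge_min => /orP[q1|q2].
- exists (-1, 0); first by apply/eqP => -[/eqP]; rewrite oppr_eq0 oner_eq0.
  move=> u u0; rewrite add_scale_pair /relu2 /= mulr0 addr0; congr pair.
  by rewrite !max_r //; lra.
- exists (0, -1); first by apply/eqP => -[/eqP]; rewrite oppr_eq0 oner_eq0.
  move=> u u0; rewrite add_scale_pair /relu2 /= mulr0 addr0; congr pair.
  by rewrite !max_r //; lra.
Qed.

Lemma affine2_continuous (phi : R * R -> R * R) : affine2 phi -> continuous phi.
Proof.
case=> [a11 [a12 [a21 [a22 [b1 [b2 phiE]]]]]] p.
have -> : phi = fun p => (a11 * p.1 + a12 * p.2 + b1, a21 * p.1 + a22 * p.2 + b2).
  exact/funext.
have lin (a c b : R) : continuous (fun q : R * R => a * q.1 + c * q.2 + b).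
  move=> q; apply: cvgD; last exact: cvg_cst.
  by apply: cvgD; apply: cvgM;
    [exact: cvg_cst | exact: cvg_fst | exact: cvg_cst | exact: cvg_snd].
by apply: (@cvg_pair _ _ _ (nbhs p) (nbhs _) (nbhs _)); apply: lin.
Qed.

Lemma affine2_translate (phi : R * R -> R * R) : affine2 phi ->
  forall p w u, phi (p + u *: w) = phi p + u *: (phi w - phi 0).
Proof.
case=> [a11 [a12 [a21 [a22 [b1 [b2 phiE]]]]]] p w u.
by rewrite !phiE; congr pair; cbn; ring.
Qed.

Lemma affine2_ray (phi phiinv : R * R -> R * R) :
  affine2 phi -> cancel phiinv phi -> forall e, e != 0 ->
  exists2 w, w != 0 & forall p u, phi (p + u *: w) = phi p + u *: e.
Proof.
move=> phi_affine phiinvK e e0; exists (phiinv (phi 0 + e)).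
  apply: contra_neq e0 => w0; have := phiinvK (phi 0 + e).
  by rewrite w0 => /esym; rewrite -[X in _ = X]addr0 => /addrI.
by move=> p u; rewrite affine2_translate // phiinvK [phi 0 + e]addrC addrK.
Qed.

End ReluAffine.

Definition relu_conj {R : realType} (phi phiinv : R * R -> R * R) p :=
  phiinv (relu2 (phi p)).

Section ReluConj.
Context {R : realType} (phi phiinv : R * R -> R * R).
Hypotheses (phi_affine : affine2 phi) (phiK : cancel phi phiinv)
  (phiinvK : cancel phiinv phi).
Local Notation F := (relu_conj phi phiinv).

Lemma relu_conj_fixedP p : F p = p <-> 0 <= Num.min (phi p).1 (phi p).2.
Proof.
rewrite -relu2_fixedP /relu_conj; split => [Fp|->]; last exact: phiK.
by rewrite -[in RHS]Fp phiinvK.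
Qed.

Lemma relu_conj_ray p : Num.min (phi p).1 (phi p).2 <= 0 ->
  exists2 w, w != 0 & forall u, 0 <= u -> F (p + u *: w) = F p.
Proof.
case/relu2_ray => e e0 eK; have [w w0 wE] := affine2_ray phi_affine phiinvK e0.
by exists w => // u u0; rewrite /relu_conj wE eK.
Qed.

Variables (T : set (R * R)) (x : R * R).
Hypothesis bounded_x : bounded2 (path_component (~` T) x).

Lemma relu_conj_moved_in_image : ~ T x -> F x <> x -> (F @` T) (F x).
Proof.
move=> xT Fx; apply: contrapT => FxT.
have [|w w0 wF] := relu_conj_ray (p := x).
  by apply/ltW; rewrite ltNge; apply/negP => /relu_conj_fixedP.
move/eqP: w0; apply; apply: (bounded_component_ray bounded_x (path_in_refl xT)).
by move=> u u0 Tu; apply: FxT; exists (x + u *: w); last exact: wF.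
Qed.

Lemma relu_conj_component_sub : F x = x ->
  path_component (~` (F @` T)) x `<=` path_component (~` T) x.
Proof.
move=> Fx z [g [gc [g0 [g1 gS]]]].
pose m t := Num.min (phi (g t)).1 (phi (g t)).2.
have gT t : 0 <= t <= 1 -> 0 <= m t -> ~ T (g t).
  by move=> t01 /relu_conj_fixedP Fg Tg; apply: (gS t t01); exists (g t).
have [m_ge0|] := pselect (forall t, 0 <= t <= 1 -> 0 <= m t).
  by exists g; do 3 split => //; move=> t t01; apply: gT t01 (m_ge0 t t01).
move=> /existsNP[t0 /not_implyP[t01 /negP]]; rewrite -ltNge => mt0.
have mc : {within `[0, 1], continuous m}.
  apply: (within_continuous_comp _ _ ((fun q => Num.min q.1 q.2) \o phi) _ gc).
  move=> q _; apply: continuous_comp; first exact: affine2_continuous.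
  exact: min_continuous.
have m0 : 0 <= m 0 by rewrite /m g0; apply/relu_conj_fixedP.
have [s [s01 ms0 m_ge0]] := first_root mc m0 t01 mt0.
have xs : path_in (~` T) x (g s).
  rewrite -g0; apply: path_in_prefix => // r r0s; apply: gT (m_ge0 r r0s).
  by case/andP: s01 r0s => _ ? /andP[? ?]; apply/andP; split => //; lra.
have [|w w0 wF] := relu_conj_ray (p := g s); first by rewrite -/(m s) ms0.
exfalso; move/eqP: w0; apply; apply: (bounded_component_ray bounded_x xs).
move=> u u0 Tu; apply: (gS s s01); exists (g s + u *: w) => //.
by rewrite wF //; apply/(relu_conj_fixedP (g s)); rewrite -/(m s) ms0.
Qed.

End ReluConj.

Theorem lemma2 (R : realType) (phi phiinv : R * R -> R * R)
  (Haff : affine2 phi) (Hl : cancel phi phiinv) (Hr : cancel phiinv phi)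
  (x : R * R) (T : set (R * R))
  (Hx : in_bounded_component (~` T) x) :
  let x' := phiinv (relu2 (phi x)) in
  let T' := (fun p => phiinv (relu2 (phi p))) @` T in
  (x' = x -> ~ T' x' -> in_bounded_component (~` T') x') /\
  (x' <> x -> T' x').
Proof.
move=> x' T'; case: Hx => xT bounded_x; split.
- move=> Fx x'T'; split => //; rewrite Fx.
  exact: bounded2S (relu_conj_component_sub Haff Hl Hr bounded_x Fx) bounded_x.
- exact: relu_conj_moved_in_image.
Qed.
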